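(* Let $0<\mu\le L$ and $C>0$. Let $f_1,f_2,\dots:\mathbb{R}^d\to\mathbb{R}$ be differentiable functions, each $L$-smooth and $\mu$-strongly convex, whose minimizers $\mathbf{w}^*_t=\arg\min_{\mathbf{w}} f_t(\mathbf{w})$ satisfy $\|\mathbf{w}^*_t\|\le C$ for all $t\ge1$. For each $t\ge1$ let weights $a_1(t),\dots,a_t(t)\in[0,1]$ satisfy $\sum_{i=1}^t a_i(t)=1$, let $F_t(\mathbf{w})=\sum_{i=1}^t a_i(t)f_i(\mathbf{w})$ and $\overline{\mathbf{w}}^*_t=\arg\min_{\mathbf{w}}F_t(\mathbf{w})$. Then for all $t\ge1$, $$\|\overline{\mathbf{w}}^*_t\|^2\le\frac{L}{\mu}C^2.$$
   Context: A function $f$ is $L$-smooth if $\|\nabla f(\mathbf{x})-\nabla f(\mathbf{y})\|\le L\|\mathbf{x}-\mathbf{y}\|$ for all $\mathbf{x},\mathbf{y}$, and $\mu$-strongly convex if $f(\mathbf{y})\ge f(\mathbf{x})+\nabla f(\mathbf{x})^\top(\mathbf{y}-\mathbf{x})+\frac{\mu}{2}\|\mathbf{y}-\mathbf{x}\|^2$ for all $\mathbf{x},\mathbf{y}$. *)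

From HB Require Import structures.
From mathcomp Require Import all_boot all_order all_algebra.
From mathcomp Require Import all_classical all_reals all_analysis.
Set Implicit Arguments. Unset Strict Implicit. Unset Printing Implicit Defensive.
Import Order.TTheory GRing.Theory Num.Theory.
Import numFieldNormedType.Exports.
Local Open Scope ring_scope.

Definition dotv (R : realType) (d : nat) (u v : 'rV[R]_d) : R :=
  \sum_(i < d) u 0 i * v 0 i.
Definition enorm (R : realType) (d : nat) (u : 'rV[R]_d) : R :=
  Num.sqrt (dotv u u).

Definition grad (R : realType) (d : nat) (f : 'rV[R]_d -> R) (x : 'rV[R]_d)
  : 'rV[R]_d := \row_(i < d) ('D_(delta_mx 0 i) f x).

Definition differentiable_everywhere (R : realType) (d : nat)
  (f : 'rV[R]_d -> R) : Prop := forall x, differentiable f x.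

Definition L_smooth (R : realType) (d : nat) (L : R) (f : 'rV[R]_d -> R) : Prop :=
  forall x y, enorm (grad f x - grad f y) <= L * enorm (x - y).

Definition strongly_convex (R : realType) (d : nat) (mu : R)
  (f : 'rV[R]_d -> R) : Prop :=
  forall x y, f y >= f x + dotv (grad f x) (y - x) + mu / 2 * enorm (y - x) ^+ 2.

Definition is_minimizer (R : realType) (d : nat) (f : 'rV[R]_d -> R)
  (w : 'rV[R]_d) : Prop := forall v, f w <= f v.

(* Let [F] be the weighted average of the [f_i].  Strong convexity survives
   averaging in its chord form, and along the chord from the minimizer [wbar]
   of [F] it gives [F 0 - F wbar >= mu/2 |wbar|^2].  Conversely each [f_i] is
   convex and [L]-smooth with gradient zero at its minimizer [w*_i], whence
   [f_i 0 - f_i wbar <= f_i 0 - f_i w*_i <= L/2 |w*_i|^2 <= L/2 C^2]; averaging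
   gives [F 0 - F wbar <= L/2 C^2].
   The bound [f y - f w <= L/2 |y - w|^2] would classically integrate the
   gradient along [[w, y]]; here it is the limit of Riemann sums of gradient
   increments over finer and finer grids. *)

From mathcomp Require Import all_boot all_order all_algebra.
From mathcomp Require Import all_classical all_reals all_analysis.
From mathcomp Require Import ring lra.
Import Order.TTheory GRing.Theory Num.Theory.
Local Open Scope ring_scope.

Section Euclidean.
Context {R : realType} {d : nat}.
Implicit Types (u v w : 'rV[R]_d).

Lemma dotvC u v : dotv u v = dotv v u.
Proof. by apply: eq_bigr => i _; rewrite mulrC. Qed.

Lemma dotvDl u v w : dotv (u + v) w = dotv u w + dotv v w.
Proof. by rewrite /dotv -big_split; apply: eq_bigr => i _; rewrite !mxE mulrDl. Qed.

Lemma dotvZl s u w : dotv (s *: u) w = s * dotv u w.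
Proof. by rewrite /dotv mulr_sumr; apply: eq_bigr => i _; rewrite !mxE mulrA. Qed.

Lemma dotv0l w : dotv 0 w = 0.
Proof. by rewrite /dotv big1 // => i _; rewrite mxE mul0r. Qed.

Lemma dotvNl u w : dotv (- u) w = - dotv u w.
Proof. by rewrite -scaleN1r dotvZl mulN1r. Qed.

Lemma dotvBl u v w : dotv (u - v) w = dotv u w - dotv v w.
Proof. by rewrite dotvDl dotvNl. Qed.

Lemma dotvZr s u w : dotv w (s *: u) = s * dotv w u.
Proof. by rewrite dotvC dotvZl dotvC. Qed.

Lemma dotvBr u v w : dotv w (u - v) = dotv w u - dotv w v.
Proof. by rewrite dotvC dotvBl !(dotvC w). Qed.

Lemma dotvv_ge0 u : 0 <= dotv u u.
Proof. by apply: sumr_ge0 => i _; rewrite -expr2 sqr_ge0. Qed.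

Lemma dotvv_eq0 u : dotv u u = 0 -> u = 0.
Proof.
move=> uu0; apply/rowP => i; rewrite mxE.
have /eqP : u 0 i * u 0 i = 0.
  by apply: (psumr_eq0P _ uu0) => // j _; rewrite -expr2 sqr_ge0.
by rewrite mulf_eq0 orbb => /eqP.
Qed.

Lemma enorm_ge0 u : 0 <= enorm u.
Proof. exact: sqrtr_ge0. Qed.

Lemma enorm_sqr u : enorm u ^+ 2 = dotv u u.
Proof. by rewrite sqr_sqrtr // dotvv_ge0. Qed.

Lemma enormZ s u : enorm (s *: u) = `|s| * enorm u.
Proof.
by rewrite /enorm dotvZl dotvZr mulrA -expr2 sqrtrM ?sqr_ge0 // sqrtr_sqr.
Qed.

Lemma enorm_eq0 u : (enorm u == 0) = (u == 0).
Proof.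
apply/eqP/eqP => [u0|->]; last by rewrite /enorm dotv0l sqrtr0.
by apply: dotvv_eq0; rewrite -enorm_sqr u0 expr0n.
Qed.

Lemma enormN u : enorm (- u) = enorm u.
Proof. by rewrite -scaleN1r enormZ normrN normr1 mul1r. Qed.

Lemma enorm_distC u v : enorm (u - v) = enorm (v - u).
Proof. by rewrite -enormN opprB. Qed.

Lemma dotv_le_enormM u v : dotv u v <= enorm u * enorm v.
Proof.
have [->|u0] := eqVneq u 0; first by rewrite dotv0l mulr_ge0 ?enorm_ge0.
have [->|v0] := eqVneq v 0; first by rewrite dotvC dotv0l mulr_ge0 ?enorm_ge0.
set a := enorm u; set b := enorm v.
have ab_gt0 : 0 < a * b by rewrite mulr_gt0 // lt_def enorm_eq0 ?u0 ?v0 enorm_ge0.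
have := dotvv_ge0 (b *: u - a *: v).
rewrite !(dotvBl, dotvBr, dotvZl, dotvZr) (dotvC v u) -!enorm_sqr -/a -/b => expand.
by rewrite -(ler_pM2l ab_gt0); nra.
Qed.

End Euclidean.

Lemma ler_add_divn (R : archiFieldType) (x y c : R) :
  (forall n : nat, (0 < n)%N -> x <= y + c / n%:R) -> x <= y.
Proof.
move=> le_xy; apply/ler_addgt0Pr => e e_gt0.
have [c_le0|c_gt0] := lerP c 0.
  by apply: le_trans (le_xy 1%N isT) _; rewrite divr1 lerD2l (le_trans c_le0) ?ltW.
apply: le_trans (le_xy (Num.trunc (c / e)).+1 isT) _.
rewrite lerD2l ler_pdivrMr ?ltr0n // mulrC -ler_pdivrMr //.
exact/ltW/truncnS_gt.
Qed.

Section WeightedSums.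
Context {R : numDomainType} {I : eqType} {r : seq I} {a : I -> R}.

Lemma ler_wsum (g h : I -> R) : (forall i, i \in r -> 0 <= a i) ->
  (forall i, i \in r -> g i <= h i) ->
  \sum_(i <- r) a i * g i <= \sum_(i <- r) a i * h i.
Proof.
move=> a_ge0 le_gh; rewrite big_seq [leRHS]big_seq.
by apply: ler_sum => i ri; rewrite ler_wpM2l ?a_ge0 ?le_gh.
Qed.

Lemma wsum_addr (g : I -> R) c : \sum_(i <- r) a i = 1 ->
  \sum_(i <- r) a i * (g i + c) = \sum_(i <- r) a i * g i + c.
Proof.
by move=> a1; under eq_bigr do rewrite mulrDr; rewrite big_split -mulr_suml a1 mul1r.
Qed.

End WeightedSums.

Definition strongly_convex_chord {R : realType} {d : nat} (mu : R)
    (f : 'rV[R]_d -> R) : Prop :=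
  forall x y s, 0 <= s <= 1 ->
    f ((1 - s) *: x + s *: y) + mu / 2 * (s * (1 - s)) * enorm (x - y) ^+ 2
      <= (1 - s) * f x + s * f y.

Section StrongConvexity.
Context {R : realType} {d : nat}.
Implicit Types (mu : R) (f : 'rV[R]_d -> R).

Lemma strongly_convexW [mu nu f] :
  nu <= mu -> strongly_convex mu f -> strongly_convex nu f.
Proof.
move=> le_nu_mu f_sc x y; apply: le_trans (f_sc x y); rewrite lerD2l.
by rewrite ler_wpM2r ?sqr_ge0 ?ler_pM2r.
Qed.

(* The gradient inequalities at [z] towards [x] and towards [y], weighted by
   [1 - s] and [s], have cancelling gradient terms. *)
Lemma strongly_convex_chordP mu f :
  strongly_convex mu f -> strongly_convex_chord mu f.
Proof.
move=> f_sc x y s /andP[s_ge0 s_le1]; set z := (1 - s) *: x + s *: y.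
have xz : x - z = s *: (x - y).
  by apply/rowP => i; rewrite !mxE; ring.
have yz : y - z = (- (1 - s)) *: (x - y).
  by apply/rowP => i; rewrite !mxE; ring.
have := f_sc z x; have := f_sc z y.
rewrite xz yz !enormZ normrN !ger0_norm ?subr_ge0 // !dotvZr !exprMn.
set D := enorm _ ^+ 2; set G := dotv _ _ => sc_y sc_x.
have s'_ge0 : 0 <= 1 - s by rewrite subr_ge0.
have := ler_wpM2l s_ge0 sc_y; have := ler_wpM2l s'_ge0 sc_x.
lra.
Qed.

Lemma strongly_convex_chord_wsum (I : eqType) (r : seq I) (a : I -> R) mu
    (f : I -> 'rV[R]_d -> R) :
  (forall i, i \in r -> 0 <= a i) -> \sum_(i <- r) a i = 1 ->
  (forall i, i \in r -> strongly_convex_chord mu (f i)) ->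
  strongly_convex_chord mu (fun w => \sum_(i <- r) a i * f i w).
Proof.
move=> a_ge0 a1 f_sc x y s s01; rewrite -wsum_addr //.
have -> : (1 - s) * \sum_(i <- r) a i * f i x + s * \sum_(i <- r) a i * f i y =
    \sum_(i <- r) a i * ((1 - s) * f i x + s * f i y).
  by rewrite !mulr_sumr -big_split; apply: eq_bigr => i _ /=; ring.
by apply: ler_wsum => // i ri; apply: f_sc.
Qed.

(* Minimality at the chord point [(1 - s) w + s y] gives
   [s (f y - f w) >= mu/2 s (1 - s) |y - w|^2]; let [s = 1/n] tend to [0]. *)
Lemma strongly_convex_chord_min_gap mu f w y :
  strongly_convex_chord mu f -> is_minimizer f w ->
  mu / 2 * enorm (y - w) ^+ 2 <= f y - f w.
Proof.
move=> f_sc w_min; set c := mu / 2 * enorm (y - w) ^+ 2.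
apply: (@ler_add_divn _ _ _ c) => n n_gt0; set s := (n%:R)^-1.
have s_gt0 : 0 < s by rewrite invr_gt0 ltr0n.
have s_le1 : s <= 1 by rewrite invf_le1 ?ler1n ?ltr0n.
have := f_sc w y s; rewrite s_le1 ltW // enorm_distC => /(_ isT) chord.
have := w_min ((1 - s) *: w + s *: y) => min_le.
by rewrite -(ler_pM2l s_gt0) /c; lra.
Qed.

End StrongConvexity.

Section SmoothConvex.
Context {R : realType} {d : nat} {L : R} {f : 'rV[R]_d -> R}.
Hypotheses (L_gt0 : 0 < L) (f_smooth : L_smooth L f)
  (f_convex : strongly_convex 0 f).

Lemma convex_grad_le x y : f x + dotv (grad f x) (y - x) <= f y.
Proof. by have := f_convex x y; rewrite mul0r mul0r addr0. Qed.

(* At [y = w - g / (2 L)], minimality and convexity give [<grad f y, g> <= 0],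
   whereas smoothness keeps [grad f y] within [|g| / 2] of [g]. *)
Lemma grad_eq0_at_min w : is_minimizer f w -> grad f w = 0.
Proof.
move=> w_min; set g := grad f w; set s := (2 * L)^-1; set y := w - s *: g.
have s_gt0 : 0 < s by rewrite invr_gt0 mulr_gt0.
have wy : w - y = s *: g by rewrite /y opprB addrC subrK.
have near_g : enorm (g - grad f y) <= enorm g / 2.
  have := f_smooth w y; rewrite wy enormZ gtr0_norm // mulrA /s.
  by rewrite invfM mulrCA divff ?gt_eqF // mulr1 mulrC.
have descent : dotv (grad f y) g <= 0.
  have := convex_grad_le y w; have := w_min y.
  by rewrite wy dotvZr -(pmulr_rle0 _ s_gt0); lra.
have : dotv g g <= enorm g ^+ 2 / 2.
  have -> : dotv g g = dotv (g - grad f y) g + dotv (grad f y) g.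
    by rewrite dotvBl subrK.
  have := dotv_le_enormM (g - grad f y) g.
  have := ler_wpM2r (enorm_ge0 g) near_g.
  by rewrite expr2; lra.
rewrite -enorm_sqr => le_half.
apply/eqP; rewrite -enorm_eq0 -sqrf_eq0 eq_le sqr_ge0 andbT; lra.
Qed.

Lemma min_increment_le w v s h : is_minimizer f w -> 0 <= s -> 0 <= h ->
  f (w + (s + h) *: v) - f (w + s *: v) <= L * (s + h) * h * enorm v ^+ 2.
Proof.
move=> w_min s_ge0 h_ge0; set y := w + (s + h) *: v.
have := convex_grad_le y (w + s *: v).
have -> : w + s *: v - y = (- h) *: v by apply/rowP => i; rewrite !mxE; ring.
rewrite dotvZr => cvx.
have grad_y : enorm (grad f y) <= L * ((s + h) * enorm v).
  have := f_smooth y w; rewrite (grad_eq0_at_min _ w_min) subr0.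
  have -> : y - w = (s + h) *: v by rewrite /y addrAC subrr add0r.
  by rewrite enormZ ger0_norm ?addr_ge0.
have := dotv_le_enormM (grad f y) v.
have := ler_wpM2r (enorm_ge0 v) grad_y.
have := enorm_ge0 v; rewrite expr2; nra.
Qed.

Lemma smooth_min_gap w y : is_minimizer f w ->
  f y - f w <= L / 2 * enorm (y - w) ^+ 2.
Proof.
move=> w_min; set v := y - w; set E := enorm v ^+ 2.
have grid h : 0 <= h -> forall k : nat,
    f (w + (k%:R * h) *: v) - f w <= L * h ^+ 2 * E * (k%:R * (k%:R + 1) / 2).
  move=> h_ge0; elim=> [|k IHk].
    by rewrite mul0r scale0r addr0 subrr !mul0r mulr0.
  have := min_increment_le w v _ _ w_min (mulr_ge0 (ler0n _ k) h_ge0) h_ge0.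
  rewrite -natr1 mulrDl mul1r -/E; lra.
apply: (@ler_add_divn _ _ _ (L / 2 * E)) => n n_gt0.
have n_neq0 : n%:R != 0 :> R by rewrite pnatr_eq0 -lt0n.
have := grid (n%:R)^-1 _ n; rewrite invr_ge0 ler0n mulfV // scale1r subrKC => /(_ isT).
suff -> : L * (n%:R)^-1 ^+ 2 * E * (n%:R * (n%:R + 1) / 2) =
    L / 2 * E + L / 2 * E / n%:R by [].
by field.
Qed.

End SmoothConvex.

Theorem lemma2 (R : realType) (d : nat) (mu L C : R)
  (f : nat -> 'rV[R]_d -> R) (wstar : nat -> 'rV[R]_d)
  (a : nat -> nat -> R) (wbar : nat -> 'rV[R]_d) :
  0 < mu -> mu <= L -> 0 < C ->
  (forall t, (1 <= t)%N -> differentiable_everywhere (f t)) ->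
  (forall t, (1 <= t)%N -> L_smooth L (f t)) ->
  (forall t, (1 <= t)%N -> strongly_convex mu (f t)) ->
  (forall t, (1 <= t)%N -> is_minimizer (f t) (wstar t)) ->
  (forall t, (1 <= t)%N -> enorm (wstar t) <= C) ->
  (forall t i, (1 <= i <= t)%N -> 0 <= a t i <= 1) ->
  (forall t, (1 <= t)%N -> \sum_(1 <= i < t.+1) a t i = 1) ->
  (forall t, (1 <= t)%N ->
     is_minimizer (fun w => \sum_(1 <= i < t.+1) a t i * f i w) (wbar t)) ->
  forall t, (1 <= t)%N -> enorm (wbar t) ^+ 2 <= L / mu * C ^+ 2.
Proof.
move=> mu_gt0 mu_le_L C_gt0 _ f_smooth f_sc wstar_min wstar_le a01 a_sum1
  wbar_min t t_ge1.
have L_gt0 : 0 < L := lt_le_trans mu_gt0 mu_le_L.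
have a_ge0 i : i \in index_iota 1 t.+1 -> 0 <= a t i.
  by rewrite mem_index_iota => /a01 /andP[].
have a1 := a_sum1 t t_ge1.
have mem_iota_ge1 i : i \in index_iota 1 t.+1 -> (1 <= i)%N.
  by rewrite mem_index_iota => /andP[].
set F := fun w => \sum_(1 <= i < t.+1) a t i * f i w.
have lower : mu / 2 * enorm (wbar t) ^+ 2 <= F 0 - F (wbar t).
  rewrite -enormN -sub0r; apply: strongly_convex_chord_min_gap (wbar_min t t_ge1).
  apply: strongly_convex_chord_wsum => // i /mem_iota_ge1 i_ge1.
  exact/strongly_convex_chordP/f_sc.
have upper : F 0 <= F (wbar t) + L / 2 * C ^+ 2.
  rewrite /F -wsum_addr //; apply: ler_wsum => // i /mem_iota_ge1 i_ge1.
  have f_convex := strongly_convexW (ltW mu_gt0) (f_sc i i_ge1).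
  have := smooth_min_gap L_gt0 (f_smooth i i_ge1) f_convex _ 0 (wstar_min i i_ge1).
  have wstar_sqr : enorm (wstar i) ^+ 2 <= C ^+ 2.
    by apply: lerXn2r; rewrite ?nnegrE ?enorm_ge0 ?(ltW C_gt0) ?wstar_le.
  have := wstar_min i i_ge1 (wbar t).
  rewrite sub0r enormN; nra.
by rewrite mulrAC ler_pdivlMr // mulrC; lra.
Qed.
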